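(* Let $q,z,m,t$ be positive integers with $q\geq 2$, $z<q$ and $t<m$, and put $L=\lfloor\frac{q-1}{q-z}\rfloor$. Let $\mathbf{P}=(p_{\mathbf{a},\mathbf{b}})$ be the array (described in the context) with rows indexed by $$\mathcal{F}=\{\mathbf{a}=(a_0,\ldots,a_{m-1},\varepsilon_0,\ldots,\varepsilon_{t-1}) : a_0,\ldots,a_{m-1}\in\mathbb{Z}_q,\ \varepsilon_0,\ldots,\varepsilon_{t-1}\in\{0,1,\ldots,L-1\}\}$$ and columns indexed by $$\mathcal{K}=\{\mathbf{b}=(b_0,\ldots,b_{t-1},\delta_0,\ldots,\delta_{t-1}) : b_0,\ldots,b_{t-1}\in\mathbb{Z}_q,\ 0\leq\delta_0<\delta_1<\cdots<\delta_{t-1}<m\},$$ where for $\mathbf{a}\in\mathcal{F}$, $\mathbf{b}\in\mathcal{K}$: $p_{\mathbf{a},\mathbf{b}}=*$ if $a_{\delta_i}\in X_{b_i,z}:=\{b_i,b_i-1,\ldots,b_i-(z-1)\}$ for some $i\in\{0,\ldots,t-1\}$; otherwise $p_{\mathbf{a},\mathbf{b}}$ is the vector $(c_0,\ldots,c_{m-1},a_{\delta_0}-b_0-1,\ldots,a_{\delta_{t-1}}-b_{t-1}-1)$, where $c_{\delta_i}=b_i-\varepsilon_i(q-z)$ for $i\in\{0,\ldots,t-1\}$ and $c_l=a_l$ for $l\notin\{\delta_0,\ldots,\delta_{t-1}\}$ (all arithmetic modulo $q$). Then $\mathbf{P}$ is a $\big(\binom{m}{t}q^t,\ L^t q^m,\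 L^t(q^m-q^{m-t}(q-z)^t),\ (q-z)^t q^m\big)$ placement delivery array. In particular $Z/F=1-(\frac{q-z}{q})^t$ and $S/F=(q-z)^t/L^t$, so the associated coded caching scheme has $\frac{M}{N}=1-(\frac{q-z}{q})^t$ and rate $R=(q-z)^t/L^t$.
   Context: A $(K,F,Z,S)$ placement delivery array (PDA) is an $F\times K$ array whose entries are either a special symbol $*$ or one of $S$ distinct non-star symbols (identified with $1,\ldots,S$), such that: (C1) $*$ appears exactly $Z$ times in each column; (C2) each of the $S$ symbols occurs at least once; (C3) for any two distinct entries $p_{j_1,k_1}=p_{j_2,k_2}=s$ with $s$ a non-star symbol, we have $j_1\neq j_2$, $k_1\neq k_2$, and $p_{j_1,k_2}=p_{j_2,k_1}=*$. A $(K,F,Z,S)$ PDA yields an $F$-division coded caching scheme for $K$ users with memory ratio $M/N=Z/F$ and rate $R=S/F$. The non-star symbols of $\mathbf{P}$ are vectors in $\mathbb{Z}_q^{m+t}$. *)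

From HB Require Import structures.
From mathcomp Require Import all_boot all_order all_algebra.
Set Implicit Arguments. Unset Strict Implicit. Unset Printing Implicit Defensive.
Import GRing.Theory.

(* An F x K array whose rows are indexed by a finType Row (|Row| = F),
   columns by a finType Col (|Col| = K), and entries are either the star
   (None) or a non-star symbol (Some s, s : Sym). *)
Definition is_PDA (Row Col : finType) (Sym : eqType)
    (K F Z S : nat) (P : Row -> Col -> option Sym) : Prop :=
  [/\ #|Col| = K, #|Row| = F,
      (forall k : Col, #|[set j : Row | P j k == None]| = Z),
      (exists sym : seq Sym, uniq sym /\ size sym = S /\
         (forall s, s \in sym <-> exists j k, P j k = Some s)) &
      (forall j1 j2 k1 k2 s, (j1, k1) != (j2, k2) ->
          P j1 k1 = Some s -> P j2 k2 = Some s ->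
          [/\ j1 != j2, k1 != k2, P j1 k2 = None & P j2 k1 = None])].

Definition Lval (q z : nat) : nat := (q - 1) %/ (q - z).

Definition rowT (q z m t : nat) : finType :=
  ({ffun 'I_m -> 'Z_q} * {ffun 'I_t -> 'I_(Lval q z)})%type.

Definition col_raw (q m t : nat) : finType :=
  ({ffun 'I_t -> 'Z_q} * {ffun 'I_t -> 'I_m})%type.
Definition col_incr (q m t : nat) : pred (col_raw q m t) :=
  fun x => [forall i : 'I_t, forall j : 'I_t, (i < j)%N ==> (x.2 i < x.2 j)%N].
Definition colT (q m t : nat) : finType := {x : col_raw q m t | col_incr x}.

Definition symT (q m t : nat) : finType :=
  ({ffun 'I_m -> 'Z_q} * {ffun 'I_t -> 'Z_q})%type.

Definition Xset (q z : nat) (b : 'Z_q) : {set 'Z_q} :=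
  [set (b - (k%:R : 'Z_q))%R | k : 'I_z].

Definition pda_entry (q z m t : nat) (a : rowT q z m t) (b : colT q m t)
    : option (symT q m t) :=
  let av := a.1 in let eps := a.2 in
  let bv := (val b).1 in let del := (val b).2 in
  if [exists i : 'I_t, av (del i) \in Xset z (bv i)] then None
  else Some
    ([ffun l : 'I_m =>
        match [pick i : 'I_t | del i == l] with
        | Some i => (bv i - ((eps i : nat) * (q - z))%N%:R)%R
        | None => av l
        end],
     [ffun i : 'I_t => (av (del i) - bv i - 1)%R]).

(* Write n_i for a_{delta_i} - b_i - 1, read as an integer in [0, q).  The entry
   p_{a,b} is a star iff some n_i >= q - z.  Hence a column has
   (q - z)^t q^(m - t) L^t non-star rows, which gives Z, and the non-star symbols
   are exactly the vectors whose last t coordinates lie in [0, q - z), which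
   gives S: each of them already occurs in the column with delta = (0, ..., t - 1).
   For C3, note that a_{delta_i} - c_{delta_i} = (n_i + 1) + eps_i (q - z).  This
   number lies in [1, q), and n_i and eps_i can be read off from it because
   n_i < q - z and L (q - z) <= q - 1.  Now suppose p_{a,b} = p_{a',b'} and
   p_{a,b'} is not a star.  Every delta'_i is then some delta_j: otherwise
   c_{delta'_i} = a_{delta'_i}, so the number a_{delta'_i} - c_{delta'_i}, which
   p_{a,b'} non-star puts in [1, q) via b'_i and eps'_i, would be 0.
   Monotonicity gives delta = delta', and decoding at each delta_i gives b = b'
   and eps = eps', and then a = a'.  All four clauses of C3 follow from this
   single injectivity statement. *)

From mathcomp Require Import all_boot all_order all_algebra.
From mathcomp Require Import ring zify.
Import GRing.Theory Num.Theory.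
Set Implicit Arguments. Unset Strict Implicit. Unset Printing Implicit Defensive.

Lemma card_ffun_pred (aT rT : finType) (P : aT -> pred rT) :
  #|[set f : {ffun aT -> rT} | [forall x, P x (f x)]]| = \prod_(x : aT) #|P x|.
Proof.
have := card_family P; rewrite foldrE big_image /= => <-.
by apply: eq_card => f; rewrite inE; apply/forallP/familyP.
Qed.

Lemma card_ffun_pred_inj (I J R : finType) (d : I -> J) (P : I -> pred R) n :
  injective d -> (forall i, #|P i| = n) ->
  #|[set f : {ffun J -> R} | [forall i, P i (f (d i))]]|
    = n ^ #|I| * #|R| ^ (#|J| - #|I|).
Proof.
move=> d_inj cardP.
pose Q l := [pred x | [forall i, (d i == l) ==> P i x]].
have -> : [set f : {ffun J -> R} | [forall i, P i (f (d i))]]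
        = [set f : {ffun J -> R} | [forall l, Q l (f l)]].
  apply/setP => f; rewrite !inE; apply/forallP/forallP => fP.
    by move=> l; apply/forallP => i; apply/implyP => /eqP <-.
  by move=> i; move/forallP/(_ i): (fP (d i)); rewrite eqxx.
rewrite (card_ffun_pred Q) (bigID (mem (codom d))) /=.
rewrite (eq_bigr (fun _ => n)) => [|l /codomP[i ->]]; last first.
  rewrite -(cardP i); apply: eq_card => x; rewrite !inE.
  apply/forallP/idP => [/(_ i)|Px j]; first by rewrite eqxx.
  by apply/implyP => /eqP/d_inj ->; exact: Px.
rewrite [X in _ * X](eq_bigr (fun _ => #|R|)) => [|l dl]; last first.
  apply: eq_card => x; rewrite !inE; apply/forallP => i.
  by apply/implyP => /eqP eq_l; case/negP: dl; rewrite -eq_l codom_f.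
rewrite prod_nat_const (prod_nat_const (predC (mem (codom d)))).
by rewrite -(cardC (mem (codom d))) (card_codom d_inj) addKn.
Qed.

(* [col_incr x] unfolds to [increasing x.2]. *)
Definition increasing t m (d : {ffun 'I_t -> 'I_m}) :=
  [forall i : 'I_t, forall j : 'I_t, (i < j) ==> (d i < d j)].

Lemma increasingP t m (d : {ffun 'I_t -> 'I_m}) :
  reflect {homo d : i j / i < j} (increasing d).
Proof.
apply: (iffP forallP) => [inc i j lt_ij | inc i].
  by move/forallP/(_ j)/implyP: (inc i); apply.
by apply/forallP => j; apply/implyP; apply: inc.
Qed.

Lemma increasing_sorted t m (d : {ffun 'I_t -> 'I_m}) :
  increasing d = sorted ltn (map val (tuple_of_finfun d)).
Proof.
apply/increasingP/idP => [inc | srt i j lt_ij].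
  rewrite /= -map_comp sorted_map.
  apply: (@homo_sorted _ _ _ (relpre val ltn)) => [i j|]; first exact: inc.
  by rewrite -sorted_map -enumT val_enum_ord iota_ltn_sorted.
have size_d : size (map val (tuple_of_finfun d)) = t by rewrite size_map size_tuple.
have := sorted_ltn_nth ltn_trans 0 srt; rewrite size_d.
move=> /(_ i j (ltn_ord i) (ltn_ord j) lt_ij).
by rewrite !(nth_map (d i) 0) ?size_tuple // -!tnth_nth !tnth_mktuple.
Qed.

Lemma card_increasing t m : #|[set d : {ffun 'I_t -> 'I_m} | increasing d]| = 'C(m, t).
Proof.
rewrite -card_ltn_sorted_tuples -(on_card_preimset (f := tuple_of_finfun)).
  by apply: eq_card => d; rewrite !inE increasing_sorted.
exact/onW_bij/(Bijective (@tuple_of_finfunK _ _) (@finfun_of_tupleK _ _)).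
Qed.

Lemma increasing_inj t m (d : {ffun 'I_t -> 'I_m}) : increasing d -> injective d.
Proof.
move=> /increasingP inc i j eq_d; apply: val_inj.
by case: (ltngtP i j) => // /inc; rewrite eq_d ltnn.
Qed.

Lemma increasing_eq t m (d d' : {ffun 'I_t -> 'I_m}) :
  increasing d -> increasing d' -> (forall i, exists j, d j = d' i) -> d = d'.
Proof.
rewrite !increasing_sorted => srt srt' sub.
rewrite sorted_map in srt; rewrite sorted_map in srt'.
have ltI_trans : transitive (relpre val ltn : rel 'I_m) by move=> ? ? ?; exact: ltn_trans.
have ltI_irr : irreflexive (relpre val ltn : rel 'I_m) by move=> ?; exact: ltnn.
have sub' : {subset tuple_of_finfun d' <= tuple_of_finfun d}.
  move=> _ /tnthP[i ->]; rewrite tnth_mktuple; have [j <-] := sub i.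
  by apply/tnthP; exists j; rewrite tnth_mktuple.
have le_size : size (tuple_of_finfun d) <= size (tuple_of_finfun d').
  by rewrite !size_tuple.
have [_ eq_mem] := uniq_min_size (sorted_uniq ltI_trans ltI_irr srt') sub' le_size.
apply: (can_inj (@tuple_of_finfunK _ _)); apply: val_inj.
by apply: (irr_sorted_eq ltI_trans ltI_irr srt srt') => x; rewrite eq_mem.
Qed.

Section ZpGap.
Variable p : nat.
Local Notation q := p.+2.
Implicit Types x y : 'Z_q.

Definition gap x y : nat := (x - y - 1)%R.

Lemma Zp_nat_inj n k : n < q -> k < q -> (n%:R = k%:R :> 'Z_q)%R -> n = k.
Proof. by move=> ltn ltk /(congr1 val); rewrite /= !val_Zp_nat // !modn_small. Qed.

Lemma gapE x y : (x - y = (gap x y).+1%:R)%R.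
Proof. by rewrite mulrSr natr_Zp subrK. Qed.

Lemma sub_gap_subr x y k : (x - (y - k%:R) = ((gap x y).+1 + k)%:R)%R.
Proof. by rewrite natrD -gapE; ring. Qed.

Lemma gap_injl y : injective (gap ^~ y).
Proof. by move=> x x' /val_inj /addIr /addIr. Qed.

Lemma gap_injr x : injective (gap x).
Proof. by move=> y y' /val_inj /addIr /addrI /oppr_inj. Qed.

Lemma gap_sub_nat y k : k < q -> gap (y - k%:R)%R y = q - k.+1.
Proof.
move=> ltk; apply: Zp_nat_inj; [exact: ltn_ord | lia |].
by rewrite natr_Zp natrB // pchar_Zp // mulrSr; ring.
Qed.

Lemma mem_Xset z x y : z <= q -> (x \in Xset z y) = (q - z <= gap x y).
Proof.
move=> le_zq; apply/imsetP/idP => [[k _ ->] | le_gap].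
  by rewrite gap_sub_nat; have := ltn_ord k; lia.
have lt_gap : gap x y < q := ltn_ord _.
have ltk : q - (gap x y).+1 < z by lia.
exists (Ordinal ltk) => //; apply: (@gap_injl y).
by rewrite gap_sub_nat /=; lia.
Qed.

Lemma card_Zp_lt n : n <= q -> #|[pred u : 'Z_q | u < n]| = n.
Proof.
move=> le_nq; have widen_inj : injective (widen_ord le_nq).
  by move=> u v /(congr1 val) /= /val_inj.
rewrite -[RHS]card_ord -(card_imset _ widen_inj).
apply: eq_card => u; rewrite inE.
apply/idP/imsetP => [lt_un | [v _ ->]]; last exact: (ltn_ord v).
by exists (Ordinal lt_un) => //; apply: val_inj.
Qed.

Lemma card_gap_lt y n : n <= q -> #|[pred x | gap x y < n]| = n.
Proof.
move=> le_nq; rewrite -[RHS](card_Zp_lt le_nq).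
rewrite -[RHS](on_card_preimset (f := fun x : 'Z_q => x - y - 1)%R).
  by apply: eq_card => x; rewrite !inE.
by apply/onW_bij; exists (fun u : 'Z_q => u + 1 + y)%R => u; ring.
Qed.

End ZpGap.

Section Construction.
Variables p z m t : nat.
Local Notation q := p.+2.
Local Notation L := (Lval q z).
Hypotheses (z_gt0 : 0 < z) (z_lt_q : z < q).
Implicit Types (a : rowT q z m t) (b : colT q m t).
Local Notation bv b := (val b).1.
Local Notation del b := (val b).2.

Lemma Lval_gt0 : 0 < L.
Proof. by rewrite divn_gt0; lia. Qed.

Definition code n e := n.+1 + e * (q - z).

Lemma code_lt n e : n < q - z -> e < L -> code n e < q.
Proof. by have := leq_divM (q - 1) (q - z); rewrite /code -/(Lval q z); nia. Qed.

Lemma code_inj n n' e e' : n < q - z -> n' < q - z -> e < L -> e' < L ->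
  ((code n e)%:R = (code n' e')%:R :> 'Z_q)%R -> n = n' /\ e = e'.
Proof.
move=> ltn ltn' lte lte' /(Zp_nat_inj (code_lt ltn lte) (code_lt ltn' lte')) eq_code.
have eq_divmod : e * (q - z) + n = e' * (q - z) + n' by rewrite /code in eq_code; lia.
have := congr1 (modn^~ (q - z)) eq_divmod; have := congr1 (divn^~ (q - z)) eq_divmod.
by rewrite /= !divnMDl ?subn_gt0 // !divn_small // !modnMDl !modn_small // !addn0.
Qed.

Lemma code_neq0 n e : n < q - z -> e < L -> ((code n e)%:R != 0 :> 'Z_q)%R.
Proof. by move=> ltn lte; apply/eqP => /(Zp_nat_inj (code_lt ltn lte) (isT : 0 < q)). Qed.

Definition nonstar a b := [forall i, gap (a.1 (del b i)) (bv b i) < q - z].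

Definition symbol a b : symT q m t :=
  ([ffun l => match [pick i | del b i == l] with
              | Some i => (bv b i - ((a.2 i : nat) * (q - z))%N%:R)%R
              | None => a.1 l
              end],
   [ffun i => (a.1 (del b i) - bv b i - 1)%R]).

Lemma pda_entryE a b : pda_entry a b = if nonstar a b then Some (symbol a b) else None.
Proof.
rewrite /pda_entry.
have -> : [exists i, a.1 (del b i) \in Xset z (bv b i)] = ~~ nonstar a b.
  rewrite negb_forall; apply: eq_existsb => i.
  by rewrite -leqNgt mem_Xset // ltnW.
by case: nonstar.
Qed.

Lemma del_inj b : injective (del b).
Proof. exact: increasing_inj (valP b). Qed.

Lemma pick_del b i : [pick j | del b j == del b i] = Some i.
Proof. by case: pickP => [j /eqP/del_inj -> // | /(_ i)]; rewrite eqxx. Qed.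

Lemma symbol_del a b i :
  (symbol a b).1 (del b i) = (bv b i - ((a.2 i : nat) * (q - z))%N%:R)%R.
Proof. by rewrite ffunE pick_del. Qed.

Lemma symbol_off a b l : (forall i, del b i != l) -> (symbol a b).1 l = a.1 l.
Proof. by move=> off; rewrite ffunE; case: pickP => // i; rewrite (negbTE (off i)). Qed.

Lemma symbol_gap a b i : (symbol a b).2 i = gap (a.1 (del b i)) (bv b i) :> nat.
Proof. by rewrite ffunE. Qed.

Lemma symbol_del_sub a a' b b' : nonstar a b' -> symbol a b = symbol a' b' ->
  forall i, exists j, del b j = del b' i.
Proof.
move=> /forallP ns' eq_s i.
have [j /eqP eq_j | none] := pickP (fun j => del b j == del b' i); first by exists j.
have off : (symbol a b).1 (del b' i) = a.1 (del b' i).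
  by apply: symbol_off => j; rewrite none.
have := code_neq0 (ns' i) (ltn_ord (a'.2 i)).
by rewrite /code -sub_gap_subr -symbol_del -eq_s off subrr eqxx.
Qed.

Lemma symbol_same_del a a' b b' : del b = del b' -> nonstar a b -> nonstar a b' ->
  symbol a b = symbol a' b' -> bv b = bv b' /\ a.2 = a'.2.
Proof.
move=> eq_del /forallP ns /forallP ns' eq_s.
suff eq_i i : bv b i = bv b' i /\ a.2 i = a'.2 i.
  by split; apply/ffunP => i; have [] := eq_i i.
have eq_code : (a.1 (del b i) - (symbol a b).1 (del b i)
                = a.1 (del b' i) - (symbol a' b').1 (del b' i))%R.
  by rewrite eq_s eq_del.
rewrite !symbol_del !sub_gap_subr in eq_code.
case/(code_inj (ns i) (ns' i) (ltn_ord _) (ltn_ord _)): eq_code => eq_gap eq_eps.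
by rewrite -eq_del in eq_gap; split; [exact: gap_injr eq_gap | exact: val_inj].
Qed.

Lemma symbol_row_inj a a' b : symbol a b = symbol a' b -> a.1 = a'.1.
Proof.
move=> eq_s; apply/ffunP => l.
have [i /eqP <- | none] := pickP (fun i => del b i == l).
  by apply: (@gap_injl _ (bv b i)); rewrite -!symbol_gap eq_s.
have off i : del b i != l by rewrite none.
by rewrite -(symbol_off a off) -(symbol_off a' off) eq_s.
Qed.

Lemma symbol_inj a a' b b' : nonstar a b -> nonstar a b' ->
  symbol a b = symbol a' b' -> a = a' /\ b = b'.
Proof.
move=> ns ns' eq_s.
have eq_del : del b = del b'.
  exact: increasing_eq (valP b) (valP b') (symbol_del_sub ns' eq_s).
have [eq_bv eq_eps] := symbol_same_del eq_del ns ns' eq_s.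
have eq_b : b = b'.
  by apply: val_inj; move: eq_bv eq_del; case: (val b) (val b') => [? ?] [? ?] /= -> ->.
subst b'; split=> //.
by move: (symbol_row_inj eq_s) eq_eps; case: a a' {eq_s ns ns'} => [? ?] [? ?] /= -> ->.
Qed.

Lemma pda_entry_C3 a1 a2 b1 b2 (s : symT q m t) : (a1, b1) != (a2, b2) ->
  pda_entry a1 b1 = Some s -> pda_entry a2 b2 = Some s ->
  [/\ a1 != a2, b1 != b2, pda_entry a1 b2 = None & pda_entry a2 b1 = None].
Proof.
move=> neq; rewrite !pda_entryE.
case ns11: (nonstar a1 b1) => //; case ns22: (nonstar a2 b2) => // -[eq1] [eq2].
have eq_s : symbol a1 b1 = symbol a2 b2 by rewrite eq1 eq2.
have ns12 : nonstar a1 b2 = false.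
  apply/negP => ns12; have [eq_j eq_k] := symbol_inj ns11 ns12 eq_s.
  by rewrite eq_j eq_k eqxx in neq.
have ns21 : nonstar a2 b1 = false.
  apply/negP => ns21; have [eq_j eq_k] := symbol_inj ns22 ns21 (esym eq_s).
  by rewrite eq_j eq_k eqxx in neq.
rewrite ns12 ns21; split=> //.
  by apply: contraFneq ns12 => ->.
by apply: contraFneq ns21 => ->.
Qed.

Lemma card_nonstar b : #|[set a | nonstar a b]| = (q - z) ^ t * q ^ (m - t) * L ^ t.
Proof.
have -> : [set a | nonstar a b] =
    setX [set c : {ffun 'I_m -> 'Z_q} | [forall i, gap (c (del b i)) (bv b i) < q - z]]
         setT.
  by apply/setP => -[c e]; rewrite !inE andbT.
have card_gap i : #|[pred x | gap x (bv b i) < q - z]| = q - z.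
  exact: card_gap_lt (leq_subr z q).
rewrite cardsX (card_ffun_pred_inj (@del_inj b) card_gap).
by rewrite cardsT card_ffun !card_ord.
Qed.

Lemma card_star b :
  #|[set a : rowT q z m t | pda_entry a b == None]|
    = L ^ t * (q ^ m - q ^ (m - t) * (q - z) ^ t).
Proof.
have -> : [set a : rowT q z m t | pda_entry a b == None] = ~: [set a | nonstar a b].
  by apply/setP => a; rewrite !inE pda_entryE; case: nonstar.
rewrite cardsCs setCK card_nonstar card_prod !card_ffun !card_ord.
by rewrite -mulnBl mulnC [(q - z) ^ t * _]mulnC.
Qed.

Definition symbols := [set s : symT q m t | [forall i, (s.2 i : nat) < q - z]].

Lemma card_symbols : #|symbols| = (q - z) ^ t * q ^ m.
Proof.
have -> : symbols = setX setT [set n in ffun_on [pred u : 'Z_q | u < q - z]].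
  by apply/setP => -[c n]; rewrite !inE; apply/forallP/ffun_onP.
rewrite cardsX cardsT cardsE card_ffun card_ffun_on card_Zp_lt ?leq_subr //.
by rewrite !card_ord mulnC.
Qed.

Lemma pda_entry_symbol a b s : pda_entry a b = Some s -> s \in symbols.
Proof.
rewrite pda_entryE inE; case: ifP => // /forallP ns [<-].
by apply/forallP => i; rewrite symbol_gap.
Qed.

Lemma symbols_reached s : t <= m -> s \in symbols -> exists a b, pda_entry a b = Some s.
Proof.
case: s => c n le_tm; rewrite inE => /forallP /= lt_n.
pose d : {ffun 'I_t -> 'I_m} := [ffun i => widen_ord le_tm i].
have d_incr : col_incr ([ffun i => c (d i)], d).
  by apply/increasingP => i j; rewrite !ffunE.
pose b : colT q m t := exist (fun x => col_incr x) _ d_incr.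
pose a : rowT q z m t :=
  ([ffun l => if [pick i | d i == l] is Some i then (n i + c l + 1)%R else c l],
   [ffun=> Ordinal Lval_gt0]).
have a_del i : a.1 (d i) = (n i + c (d i) + 1)%R by rewrite ffunE (pick_del b i).
have a_off l : (forall i, d i != l) -> a.1 l = c l.
  by move=> off; rewrite ffunE; case: pickP => // i; rewrite (negbTE (off i)).
have gap_a i : gap (a.1 (del b i)) (bv b i) = n i.
  by rewrite /gap [del b]/= a_del [bv b]/= !ffunE; congr nat_of_ord; ring.
exists a, b; rewrite pda_entryE.
have -> : nonstar a b by apply/forallP => i; rewrite gap_a.
rewrite [symbol a b]surjective_pairing; congr (Some (_, _)); apply/ffunP.
  move=> l; have [i /eqP <- | none] := pickP (fun i => del b i == l).
    by rewrite symbol_del !ffunE /= mul0n subr0.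
  have off i : del b i != l by rewrite none.
  by rewrite (symbol_off _ off) (a_off _ off).
by move=> i; apply: val_inj; exact: etrans (symbol_gap a b i) (gap_a i).
Qed.

Lemma symbolsP s : t <= m -> s \in symbols <-> exists a b, pda_entry a b = Some s.
Proof.
by move=> le_tm; split=> [|[a [b /pda_entry_symbol]]]; first exact: symbols_reached.
Qed.

End Construction.

Lemma card_colT p m t : #|colT p.+2 m t| = 'C(m, t) * p.+2 ^ t.
Proof.
rewrite card_sig
  (@eq_card _ _ (setX [set: {ffun 'I_t -> 'Z_p.+2}] [set d | increasing d])).
  by rewrite cardsX cardsT card_ffun card_increasing !card_ord mulnC.
by move=> -[c d]; rewrite !inE.
Qed.

Lemma star_ratio (R : numFieldType) (q L z m t : nat) : 0 < q -> 0 < L -> t <= m ->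
  ((L ^ t * (q ^ m - q ^ (m - t) * (q - z) ^ t))%:R / (L ^ t * q ^ m)%:R
     = 1 - ((q - z)%:R / q%:R) ^+ t :> R)%R.
Proof.
move=> q_gt0 L_gt0 le_tm.
have q_pow : q ^ m = q ^ (m - t) * q ^ t by rewrite -expnD subnK.
have le_pow : (q - z) ^ t <= q ^ t.
  by elim: (t) => // k IH; rewrite !expnS leq_mul ?leq_subr.
rewrite q_pow natrM (natrB _ (leq_mul (leqnn _) le_pow)) !natrM !natrX expr_div_n.
have q_neq0 : (q%:R != 0 :> R)%R by rewrite pnatr_eq0 -lt0n.
have L_neq0 : (L%:R != 0 :> R)%R by rewrite pnatr_eq0 -lt0n.
by field; rewrite !expf_neq0.
Qed.

Lemma symbol_ratio (R : numFieldType) (q L z m t : nat) : 0 < q -> 0 < L ->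
  (((q - z) ^ t * q ^ m)%:R / (L ^ t * q ^ m)%:R = (q - z)%:R ^+ t / L%:R ^+ t :> R)%R.
Proof.
move=> q_gt0 L_gt0; rewrite !natrM !natrX.
have q_neq0 : (q%:R != 0 :> R)%R by rewrite pnatr_eq0 -lt0n.
have L_neq0 : (L%:R != 0 :> R)%R by rewrite pnatr_eq0 -lt0n.
by field; rewrite !expf_neq0.
Qed.

Theorem theorem2 (q z m t : nat) :
  (2 <= q)%N -> (0 < z)%N -> (z < q)%N -> (0 < t)%N -> (t < m)%N ->
  let L := Lval q z in
  let K := 'C(m, t) * q ^ t in
  let F := L ^ t * q ^ m in
  let Z := L ^ t * (q ^ m - q ^ (m - t) * (q - z) ^ t) in
  let S := (q - z) ^ t * q ^ m in
  is_PDA K F Z S (@pda_entry q z m t) /\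
  ((Z%:R / F%:R : rat) = 1 - ((q - z)%:R / q%:R) ^+ t)%R /\
  ((S%:R / F%:R : rat) = (q - z)%:R ^+ t / L%:R ^+ t)%R.
Proof.
case: q => [|[|p]] // _ z_gt0 z_lt_q _ /ltnW le_tm L K F Z S.
have L_gt0 : 0 < L := Lval_gt0 z_gt0 z_lt_q.
split; [split | split].
- exact: card_colT.
- by rewrite card_prod !card_ffun !card_ord mulnC.
- exact: card_star.
- exists (enum (symbols p z m t)); split; first exact: enum_uniq.
  split; first by rewrite -cardE card_symbols.
  by move=> s; rewrite mem_enum; exact: symbolsP.
- exact: pda_entry_C3.
- exact: star_ratio.
- exact: symbol_ratio.
Qed.
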